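(* Let $\lambda$ be a nonzero real number, $x$ real, and $n\ge0$ an integer. Then $$\sum_{k=0}^{n}S_{1,\lambda}(n,k)\,\mathcal{E}_{k,\lambda}(x)=n!\sum_{k=0}^{n}\binom{x}{k}\Big(-\frac{1}{2}\Big)^{n-k},$$ and $$\mathcal{E}_{n,\lambda}(x)=\sum_{k=0}^{n}k!\,S_{2,\lambda}(n,k)\sum_{j=0}^{k}\binom{x}{j}\Big(-\frac{1}{2}\Big)^{k-j}.$$
   Context: For real $x$ and integer $k\ge0$: $(x)_{0,\lambda}=1$, $(x)_{k,\lambda}=x(x-\lambda)\cdots(x-(k-1)\lambda)$; $(x)_0=1$, $(x)_k=x(x-1)\cdots(x-k+1)$. The degenerate exponential is $e_\lambda^x(t)=\sum_{k\ge0}(x)_{k,\lambda}t^k/k!=(1+\lambda t)^{x/\lambda}$, and $e_\lambda(t)=e^1_\lambda(t)$. The degenerate Euler polynomials are defined by $\frac{2}{e_\lambda(t)+1}e_\lambda^x(t)=\sum_{n\ge0}\mathcal{E}_{n,\lambda}(x)\frac{t^n}{n!}$. The degenerate Stirling numbers are defined by $(x)_{n}=\sum_{k=0}^{n}S_{1,\lambda}(n,k)(x)_{k,\lambda}$ and $(x)_{n,\lambda}=\sum_{k=0}^{n}S_{2,\lambda}(n,k)(x)_{k}$ ($n\ge0$). *)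

From mathcomp Require Import all_boot all_order all_algebra.
From mathcomp Require Import reals.
Set Implicit Arguments. Unset Strict Implicit. Unset Printing Implicit Defensive.
Import Order.TTheory GRing.Theory Num.Theory.
Local Open Scope ring_scope.

Definition dfall {R : realType} (lam x : R) (k : nat) : R :=
  \prod_(i < k) (x - i%:R * lam).

Definition fall {R : realType} (x : R) (k : nat) : R :=
  \prod_(i < k) (x - i%:R).

Definition rbinom {R : realType} (x : R) (k : nat) : R := fall x k / (k`!)%:R.

(* coefficient of t^n in the formal power series e_lambda^x(t) = sum (x)_{k,lambda} t^k/k! *)
Definition degexp_coef {R : realType} (lam x : R) (n : nat) : R :=
  dfall lam x n / (n`!)%:R.

Definition cauchy {R : realType} (a b : nat -> R) (n : nat) : R :=
  \sum_(k < n.+1) a k * b (n - k)%N.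

(* E is the family of degenerate Euler polynomials: as formal power series in t,
   2/(e_lambda(t)+1) e_lambda^x(t) = sum_n E n x t^n/n!,
   i.e. (since e_lambda(t)+1 has invertible constant term 2)
   (e_lambda(t) + 1) * (sum_n E n x t^n/n!) = 2 e_lambda^x(t). *)
Definition is_degEuler {R : realType} (lam : R) (E : nat -> R -> R) : Prop :=
  forall x : R, forall n : nat,
    cauchy (fun k => degexp_coef lam 1 k + (k == 0%N)%:R)
           (fun k => E k x / (k`!)%:R) n
    = 2 * degexp_coef lam x n.

Definition is_degStirling1 {R : realType} (lam : R) (S1 : nat -> nat -> R) : Prop :=
  forall (n : nat) (x : R), fall x n = \sum_(k < n.+1) S1 n k * dfall lam x k.

Definition is_degStirling2 {R : realType} (lam : R) (S2 : nat -> nat -> R) : Prop :=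
  forall (n : nat) (x : R), dfall lam x n = \sum_(k < n.+1) S2 n k * fall x k.

(* The degenerate Euler polynomials act as an umbral functional: the linear map
   L sending (y)_{j,lambda} to E_j(x) satisfies L(Q(y+1) + Q(y)) = 2 Q(x) for
   every polynomial Q.  This is the defining identity
   (e_lambda(t) + 1) sum_n E_n(x) t^n/n! = 2 e_lambda^x(t) read through the
   degenerate Vandermonde identity, and L is well defined because the
   (y)_{j,lambda} form a basis when lambda <> 0.  Taking Q = binom(y, k+1), for
   which Q(y+1) + Q(y) = 2 binom(y, k+1) + binom(y, k), shows that
   a_k = L(binom(y, k)) = sum_j S1(k,j) E_j(x) / k! satisfies a_0 = 1 and
   2 a_{k+1} + a_k = 2 binom(x, k+1); solving this recurrence gives the first
   identity.  The second follows because the matrices S2 and S1 are inverse. *)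

From mathcomp Require Import all_boot all_order all_algebra.
From mathcomp Require Import reals ring.
Set Implicit Arguments.
Unset Strict Implicit.
Unset Printing Implicit Defensive.

Import Order.TTheory GRing.Theory Num.Theory.
Local Open Scope ring_scope.

Lemma fact_neq0 (R : numDomainType) n : n`!%:R != 0 :> R.
Proof. by rewrite pnatr_eq0 -lt0n fact_gt0. Qed.

Lemma big_ord_triangle (V : nmodType) n (F : nat -> nat -> V) :
  \sum_(k < n) \sum_(j < k.+1) F k j
  = \sum_(j < n) \sum_(k < n | (j <= k)%N) F k j.
Proof.
under eq_bigr => k _ do rewrite (big_ord_widen n (F k) (ltn_ord k)).
by rewrite (exchange_big_dep predT).
Qed.

Lemma linrec_neg_half (F : numFieldType) (a b : nat -> F) :
  a 0%N = b 0%N -> (forall k, 2 * a k.+1 + a k = 2 * b k.+1) ->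
  forall n, a n = \sum_(i < n.+1) b i * (- 2^-1) ^+ (n - i).
Proof.
move=> a0 aS; have two_neq0 : (2 : F) != 0 by rewrite pnatr_eq0.
elim=> [|n IHn]; first by rewrite big_ord1 a0 mulr1.
rewrite big_ord_recr /= subnn mulr1.
have -> : \sum_(i < n.+1) b i * (- 2^-1) ^+ (n.+1 - i) = - 2^-1 * a n.
  rewrite IHn mulr_sumr; apply: eq_bigr => i _.
  have ilen : (i <= n)%N := ltn_ord i.
  by rewrite subSn // exprS mulrCA.
have := aS n; move: (a n.+1) (a n) (b n.+1) => u v w uv.
apply: (mulfI two_neq0).
by rewrite mulrDr mulNr mulrN mulrA divff // mul1r -uv addrC addrK.
Qed.

Section FallingFactorials.
Variable R : realType.
Implicit Types (lam x y : R) (c d : nat -> R).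

Lemma dfall0 lam x : dfall lam x 0 = 1.
Proof. by rewrite /dfall big_ord0. Qed.

Lemma dfallS lam x n : dfall lam x n.+1 = dfall lam x n * (x - n%:R * lam).
Proof. by rewrite /dfall big_ord_recr. Qed.

Lemma fall0 x : fall x 0 = 1.
Proof. by rewrite /fall big_ord0. Qed.

Lemma fallS x n : fall x n.+1 = fall x n * (x - n%:R).
Proof. by rewrite /fall big_ord_recr. Qed.

Lemma fallSD1 y n : fall (y + 1) n.+1 = fall y n.+1 + n.+1%:R * fall y n.
Proof.
have -> : fall (y + 1) n.+1 = (y + 1) * fall y n.
  rewrite /fall big_ord_recl /= subr0; congr (_ * _).
  by apply: eq_bigr => i _; rewrite /bump /= natrD; ring.
by rewrite fallS -addn1 natrD; ring.
Qed.

Lemma rbinom0 x : rbinom x 0 = 1.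
Proof. by rewrite /rbinom fall0 divr1. Qed.

Lemma dfallD lam a b n : dfall lam (a + b) n =
  \sum_(k < n.+1) 'C(n, k)%:R * dfall lam a k * dfall lam b (n - k).
Proof.
elim: n => [|n IHn]; first by rewrite big_ord1 !dfall0 bin0 mulr1 mul1r.
have split_step (k : 'I_n.+1) :
    'C(n, k)%:R * dfall lam a k * dfall lam b (n - k) * (a + b - n%:R * lam) =
    'C(n, k)%:R * dfall lam a k.+1 * dfall lam b (n - k) +
    'C(n, k)%:R * dfall lam a k * dfall lam b (n.+1 - k).
  have kn : (k <= n)%N by rewrite -ltnS.
  by rewrite subSn // !dfallS natrB //; ring.
rewrite dfallS IHn mulr_suml (eq_bigr _ (fun k _ => split_step k)) big_split /=.
rewrite [in RHS]big_ord_recl /= bin0 subn0 dfall0 mulr1 mul1r.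
under [in RHS]eq_bigr => k _ do rewrite /bump /= add1n subSS binS natrD !mulrDl.
rewrite big_split /= [X in _ = _ + X]addrC [RHS]addrCA; congr (_ + _).
rewrite big_ord_recl /= bin0 subn0 dfall0 mulr1 mul1r; congr (_ + _).
rewrite [in RHS]big_ord_recr /= bin_small // !mul0r addr0.
by apply: eq_bigr => k _; rewrite /bump /= add1n subSS.
Qed.

Lemma dfall_natmul_eq0 lam j k : (k < j)%N -> dfall lam (k%:R * lam) j = 0.
Proof.
by move=> kj; rewrite /dfall (bigD1 (Ordinal kj)) //= subrr mul0r.
Qed.

Lemma dfall_natmul_neq0 lam k : lam != 0 -> dfall lam (k%:R * lam) k != 0.
Proof.
move=> lam0; apply/prodf_neq0 => i _.
by rewrite -mulrBl mulf_neq0 // subr_eq0 eqr_nat neq_ltn ltn_ord orbT.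
Qed.

(* Evaluating at y = k lam kills every (y)_{j,lam} with j > k. *)
Lemma dfall_coef_eq0 lam N c : lam != 0 ->
  (forall y, \sum_(j < N) c j * dfall lam y j = 0) ->
  forall k, (k < N)%N -> c k = 0.
Proof.
move=> lam0 Hc; elim/ltn_ind => k IHk kN.
have := Hc (k%:R * lam); rewrite (bigD1 (Ordinal kN)) //= big1 ?addr0.
  by move/eqP; rewrite mulf_eq0 (negbTE (dfall_natmul_neq0 k lam0)) orbF => /eqP.
move=> j; rewrite -val_eqE /=; case: ltngtP => // [jk|kj] _.
  by rewrite IHk ?mul0r // (ltn_trans jk).
by rewrite dfall_natmul_eq0 ?mulr0.
Qed.

Lemma dfall_coef_inj lam N c d : lam != 0 ->
  (forall y, \sum_(j < N) c j * dfall lam y j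
             = \sum_(j < N) d j * dfall lam y j) ->
  forall k, (k < N)%N -> c k = d k.
Proof.
move=> lam0 Hcd k kN; apply/eqP; rewrite -subr_eq0; apply/eqP.
apply: (dfall_coef_eq0 (c := fun j => c j - d j) lam0 _ kN) => y.
by under eq_bigr do rewrite mulrBl; rewrite sumrB Hcd subrr.
Qed.

Lemma degStirling_inv lam (S1 S2 : nat -> nat -> R) : lam != 0 ->
  is_degStirling1 lam S1 -> is_degStirling2 lam S2 ->
  forall n c, \sum_(k < n.+1) S2 n k * \sum_(j < k.+1) S1 k j * c j = c n.
Proof.
move=> lam0 HS1 HS2 n.
pose M j := \sum_(k < n.+1 | (j <= k)%N) S2 n k * S1 k j.
have sumM c : \sum_(k < n.+1) S2 n k * \sum_(j < k.+1) S1 k j * c j =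
              \sum_(j < n.+1) M j * c j.
  under eq_bigr do rewrite mulr_sumr.
  rewrite (big_ord_triangle _ (fun k j => S2 n k * (S1 k j * c j))).
  apply: eq_bigr => j _.
  by rewrite mulr_suml; apply: eq_bigr => k _; rewrite mulrA.
have kronecker c : \sum_(j < n.+1) (j == n :> nat)%:R * c j = c n.
  rewrite big_ord_recr /= eqxx mul1r big1 ?add0r // => j _.
  by rewrite ltn_eqF // mul0r.
have M_kronecker : forall j, (j < n.+1)%N -> M j = (j == n :> nat)%:R.
  apply: (@dfall_coef_inj lam n.+1 M (fun j => (j == n :> nat)%:R) lam0) => y.
  rewrite -sumM kronecker HS2; apply: eq_bigr => k _; congr (_ * _).
  by rewrite HS1.
move=> c; rewrite sumM -[RHS]kronecker.
by apply: eq_bigr => j _; rewrite M_kronecker.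
Qed.
End FallingFactorials.

Section DegenerateEuler.
Variables (R : realType) (lam : R) (E : nat -> R -> R).
Hypothesis HE : is_degEuler lam E.

Lemma degEuler_rec x n :
  \sum_(k < n.+1) 'C(n, k)%:R * dfall lam 1 (n - k) * E k x + E n x
  = 2 * dfall lam x n.
Proof.
have := HE x n; rewrite /cauchy /degexp_coef.
under eq_bigr do rewrite mulrDl.
rewrite big_split /= [X in _ + X]big_ord_recl /= subn0 mul1r.
rewrite [X in _ + (_ + X)]big1 ?addr0; last by move=> i _; rewrite mul0r.
rewrite (reindex_inj rev_ord_inj) /= => HEn.
have nf := fact_neq0 R n.
apply: (mulIf (invr_neq0 nf)); rewrite -mulrA -HEn mulrDl mulr_suml.
congr (_ + _); apply: eq_bigr => k _; have kn : (k <= n)%N by rewrite -ltnS.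
rewrite subSS subKn // -(bin_fact kn) !natrM.
have bn : 'C(n, k)%:R != 0 :> R by rewrite pnatr_eq0 -lt0n bin_gt0.
by field; rewrite !fact_neq0 bn.
Qed.

Lemma degEuler0 x : E 0%N x = 1.
Proof.
have := degEuler_rec x 0; rewrite big_ord1 /= bin0 !dfall0 !mul1r mulr1 => HE0.
have two_neq0 : (2 : R) != 0 by rewrite pnatr_eq0.
by apply: (mulfI two_neq0); rewrite mulr1 -[RHS]HE0 mulr_natl mulr2n.
Qed.

Hypothesis lam0 : lam != 0.

Lemma degEuler_shift x N (c e : nat -> R) :
  (forall y, \sum_(j < N) c j * dfall lam y j
             = \sum_(j < N) e j * (dfall lam (y + 1) j + dfall lam y j)) ->
  \sum_(j < N) c j * E j x = 2 * \sum_(j < N) e j * dfall lam x j.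
Proof.
move=> Hce.
(* d lists the coordinates of Q(y + 1) + Q(y) in the basis (y)_{k,lam}. *)
pose d k :=
  \sum_(j < N | (k <= j)%N) e j * ('C(j, k)%:R * dfall lam 1 (j - k)) + e k.
have sum_d (g : nat -> R) : \sum_(k < N) d k * g k = \sum_(j < N) e j *
    (\sum_(k < j.+1) 'C(j, k)%:R * dfall lam 1 (j - k) * g k + g j).
  under [RHS]eq_bigr do rewrite mulrDr mulr_sumr.
  under [LHS]eq_bigr do rewrite mulrDl mulr_suml.
  rewrite !big_split /=.
  rewrite (big_ord_triangle _
    (fun j k => e j * ('C(j, k)%:R * dfall lam 1 (j - k) * g k))); congr (_ + _).
  by apply: eq_bigr => k _; apply: eq_bigr => j _; rewrite !mulrA.
have cd : forall k, (k < N)%N -> c k = d k.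
  apply: (@dfall_coef_inj _ lam N c d lam0) => y.
  rewrite Hce sum_d; apply: eq_bigr => j _; congr (_ * (_ + _)).
  by rewrite (dfallD lam y 1); apply: eq_bigr => k _; rewrite mulrAC.
under eq_bigr => k _ do rewrite (cd k (ltn_ord k)).
rewrite (sum_d (E^~ x)) mulr_sumr.
by apply: eq_bigr => j _; rewrite degEuler_rec mulrCA.
Qed.

Variables (S1 : nat -> nat -> R) (x : R).
Hypothesis HS1 : is_degStirling1 lam S1.
Local Notation Phi k := (\sum_(j < k.+1) S1 k j * E j x) (k in scope nat_scope).

Lemma degStirling1_00 : S1 0%N 0%N = 1.
Proof. by have := HS1 0 0; rewrite big_ord1 fall0 dfall0 mulr1. Qed.

Lemma degStirling1_Euler_rec k :
  2 * (Phi k.+1 / k.+1`!%:R) + Phi k / k`!%:R = 2 * rbinom x k.+1.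
Proof.
pose a j := S1 k.+1 j / k.+1`!%:R.
pose b j := (j < k.+1)%:R * (S1 k j / k`!%:R).
have sum_a (g : nat -> R) :
    \sum_(j < k.+2) a j * g j = (\sum_(j < k.+2) S1 k.+1 j * g j) / k.+1`!%:R.
  by rewrite mulr_suml; apply: eq_bigr => j _; rewrite mulrAC.
have sum_b (g : nat -> R) :
    \sum_(j < k.+2) b j * g j = (\sum_(j < k.+1) S1 k j * g j) / k`!%:R.
  rewrite big_ord_recr /= /b ltnn !mul0r addr0 mulr_suml.
  by apply: eq_bigr => j _; rewrite ltn_ord mul1r mulrAC.
have sum_ab (g : nat -> R) : \sum_(j < k.+2) (2 * a j + b j) * g j
    = 2 * \sum_(j < k.+2) a j * g j + \sum_(j < k.+2) b j * g j.
  rewrite mulr_sumr -big_split /=.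
  by apply: eq_bigr => j _; rewrite mulrDl mulrA.
rewrite /rbinom HS1 -(sum_a (E^~ x)) -(sum_b (E^~ x)) -(sum_a (dfall lam x)).
rewrite -(sum_ab (E^~ x)).
apply: (@degEuler_shift x k.+2 (fun j => 2 * a j + b j) a) => y.
under [RHS]eq_bigr do rewrite mulrDr.
rewrite (sum_ab (dfall lam y)) big_split /= (sum_a (dfall lam (y + 1))).
rewrite (sum_a (dfall lam y)) (sum_b (dfall lam y)) -!HS1 fallSD1 factS natrM.
by field; rewrite fact_neq0 nat1r pnatr_eq0.
Qed.

Lemma degStirling1_Euler k :
  Phi k / k`!%:R = \sum_(i < k.+1) rbinom x i * (- 2^-1) ^+ (k - i).
Proof.
apply: (linrec_neg_half (a := fun k => Phi k / k`!%:R)) => [|m].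
  by rewrite big_ord1 degStirling1_00 degEuler0 rbinom0 mulr1 divr1.
exact: degStirling1_Euler_rec.
Qed.

End DegenerateEuler.

Theorem theorem4 (R : realType) (lam : R) (E : nat -> R -> R)
  (S1 S2 : nat -> nat -> R) :
  lam != 0 ->
  is_degEuler lam E -> is_degStirling1 lam S1 -> is_degStirling2 lam S2 ->
  forall (x : R) (n : nat),
    \sum_(k < n.+1) S1 n k * E k x
      = (n`!)%:R * \sum_(k < n.+1) rbinom x k * (- 2^-1) ^+ (n - k)
    /\
    E n x = \sum_(k < n.+1) (k`!)%:R * S2 n k *
              \sum_(j < k.+1) rbinom x j * (- 2^-1) ^+ (k - j).
Proof.
move=> lam0 HE HS1 HS2 x n.
have sumS1E := degStirling1_Euler HE lam0 x HS1.
split; first by rewrite -sumS1E mulrC divfK ?fact_neq0.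
rewrite -(degStirling_inv lam0 HS1 HS2 n (E^~ x)); apply: eq_bigr => k _.
by rewrite -sumS1E mulrAC [_ * (_ / _)]mulrC divfK ?fact_neq0 // mulrC.
Qed.
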